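(* For one-sided matching with $n$ agents and $n$ items and unrestricted nonnegative valuations, there are deterministic algorithms achieving each of the following: (i) distortion $O(n)$ using one value query per agent; (ii) for any constant integer $k\ge1$, distortion $O(n^{1/k})$ using $O(\log n)$ queries per agent; (iii) distortion $O(1)$ using $O(\log^2 n)$ queries per agent.
   Context: One-sided matching: there is a set $N$ of $n$ agents and a set $A$ of $n$ items. Each agent $i$ has a valuation function $v_i:A\to\mathbb{R}_{\ge0}$. The algorithm receives the agents' rankings of the items consistent with their values (if $a\succ_i b$ then $v_i(a)\ge v_i(b)$). It may ask value queries returning $v_i(j)$, and it outputs a perfect matching (bijection $N\to A$). Its distortion is the worst case, over all valuation profiles, of the optimal social welfare $\max_Z\sum_i v_i(z_i)$ divided by the social welfare $\sum_i v_i(y_i)$ of the output matching. *)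

From HB Require Import structures.
From mathcomp Require Import all_boot all_order all_algebra all_fingroup.
From mathcomp Require Import reals exp.
Set Implicit Arguments. Unset Strict Implicit. Unset Printing Implicit Defensive.
Import Order.TTheory GRing.Theory Num.Theory.
Local Open Scope ring_scope.

Section OneSidedMatching.
Variables (R : realType) (n : nat).

(* Agents and items are both indexed by 'I_n. v i j = value of agent i for item j. *)
Definition valuation := 'I_n -> 'I_n -> R.
Definition nonneg_valuation (v : valuation) := forall i j, 0 <= v i j.

(* A ranking profile: rk i j = position (0 = best) of item j in agent i's ranking. *)
Definition ranking := 'I_n -> {perm 'I_n}.
Definition consistent (rk : ranking) (v : valuation) :=
  forall i a b, (rk i a < rk i b)%N -> v i b <= v i a.

Definition matching := {perm 'I_n}.
Definition SW (v : valuation) (M : matching) : R := \sum_(i < n) v i (M i).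
Definition OPT (v : valuation) : R := \big[Num.max/0]_(Z : matching) SW v Z.

Inductive action := Query of 'I_n & 'I_n | Output of matching.
(* history: sequence of (agent, item, answered value) *)
Definition history := seq ('I_n * 'I_n * R).
Definition algorithm := ranking -> history -> action.

Fixpoint run (A : algorithm) (rk : ranking) (v : valuation) (fuel : nat)
    (h : history) : option (history * matching) :=
  match fuel with
  | 0 => None
  | fuel'.+1 =>
      match A rk h with
      | Output M => Some (h, M)
      | Query i j => run A rk v fuel' (rcons h (i, j, v i j))
      end
  end.

Definition queries_of (h : history) (i : 'I_n) : nat :=
  count (fun q : 'I_n * 'I_n * R => q.1.1 == i) h.

(* A achieves distortion at most D using at most qb value queries per agent:
   on every nonnegative profile and every consistent ranking profile, it outputs
   a matching after asking each agent at most qb queries (hence at most n*qb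
   queries in total), and OPT <= D * SW(output). *)
Definition achieves (A : algorithm) (qb : nat) (D : R) :=
  forall (v : valuation) (rk : ranking), nonneg_valuation v -> consistent rk v ->
  exists (h : history) (M : matching),
    run A rk v (n * qb).+1 [::] = Some (h, M) /\
    (forall i, (queries_of h i <= qb)%N) /\
    OPT v <= D * SW v M.

End OneSidedMatching.

From HB Require Import structures.
From mathcomp Require Import all_boot all_order all_algebra all_fingroup.
From mathcomp Require Import reals exp.
From mathcomp Require Import zify ring lra.
Import Order.TTheory GRing.Theory Num.Theory.
Local Open Scope ring_scope.
Set Implicit Arguments. Unset Strict Implicit. Unset Printing Implicit Defensive.

(* All three bounds come from one family of algorithms, parameterized by a
   ratio beta >= 1 and a number L of threshold levels.  Agents are handled one
   after the other; agent i first reveals the value t_i of its top item, then for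
   each level l = 1..L a binary search along its ranking locates the last item
   whose value is at least the threshold t_i / beta^l, using O(log n) queries.
   From the answers we build the estimate w_i(j) = largest revealed value of an
   item ranked no higher than j; w <= v, and v_i(j) <= beta w_i(j) + t_i/beta^L.
   Outputting a w-optimal matching then gives distortion beta + n / beta^L
   (the largest t_i is a lower bound on the welfare).  Choosing
   (beta, L) = (1, 0), (n^(1/k), k) and (2, log n + 1) gives (i), (ii), (iii). *)

Lemma iota0S k : iota 0 k.+1 = rcons (iota 0 k) k.
Proof. by rewrite -cats1 -addn1 iotaD. Qed.

Lemma run_more (R : realType) n (A : algorithm R n) rk v fuel h res k :
  run A rk v fuel h = Some res -> run A rk v (fuel + k) h = Some res.
Proof.
elim: fuel h => [|fuel IH] h //=.
by case: (A rk h) => [i j|M] //; apply: IH.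
Qed.

Lemma run_trace (R : realType) n (A : algorithm R n) rk v
    (H : nat -> history R n) (q : nat -> 'I_n * 'I_n) N M :
  (forall k, (k < N)%N -> A rk (H k) = Query (q k).1 (q k).2 /\
     H k.+1 = rcons (H k) ((q k).1, (q k).2, v (q k).1 (q k).2)) ->
  A rk (H N) = Output M ->
  forall k d, (k + d = N)%N -> run A rk v d.+1 (H k) = Some (H N, M).
Proof.
move=> step out k d; elim: d k => [|d IH] k hkd.
  by rewrite addn0 in hkd; rewrite /= hkd out.
have [hA hH] := step k (ltac:(lia)).
by rewrite /= hA -hH; apply: IH; rewrite addSnnS.
Qed.

Lemma achieves_mono (R : realType) n (A : algorithm R n) q q' (D D' : R) :
  achieves A q D -> (q <= q')%N -> D <= D' -> achieves A q' D'.
Proof.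
move=> hA hq hD v rk v0 hc; have [h [M [hrun [hqs hO]]]] := hA v rk v0 hc.
exists h, M; split; last split.
- have -> : (n * q').+1 = ((n * q).+1 + (n * q' - n * q))%N.
    by rewrite addSn subnKC // leq_mul.
  exact: run_more.
- by move=> i; apply: leq_trans (hqs i) hq.
- apply: le_trans hO (ler_wpM2r _ hD).
  by apply: sumr_ge0 => i _; apply: v0.
Qed.

Section Distortion.
Variables (R : realType) (n' : nat).
Local Notation n := n'.+1.

(* The distortion of a matching that is optimal for an underestimate w of v
   with  v <= beta w + delta t_i  row-wise, where every t_i is dominated by some
   w_i(j): the largest t_i is at most SW_w(M), since the single pair (i, j)
   extends to a matching. *)
Lemma distortion_bound (v w : valuation R n) (t : 'I_n -> R) (beta delta : R)
    (M : matching n) :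
  0 <= beta -> 0 <= delta ->
  (forall i j, 0 <= w i j) -> (forall i j, w i j <= v i j) ->
  (forall i, exists j, t i <= w i j) ->
  (forall i j, v i j <= beta * w i j + t i * delta) ->
  (forall Z : matching n, SW w Z <= SW w M) ->
  OPT v <= (beta + n%:R * delta) * SW v M.
Proof.
move=> b0 d0 w0 wv tw vb Mmax.
set istar := [arg max_(i > ord0) t i]%O.
have t_max i : t i <= t istar by rewrite /istar; case: arg_maxP => //= i0 _; apply.
have [jstar t_jstar] := tw istar.
have t_SWw : t istar <= SW w M.
  apply: le_trans t_jstar (le_trans _ (Mmax (tperm istar jstar))).
  rewrite /SW (bigD1 istar) //= tpermL lerDl; apply: sumr_ge0 => i _; exact: w0.
have SWw_v : SW w M <= SW v M by apply: ler_sum => i _; exact: wv.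
have SWv0 : 0 <= SW v M.
  by apply: le_trans SWw_v; apply: sumr_ge0 => i _; exact: w0.
apply: bigmax_le => [|Z _]; first by rewrite mulr_ge0 ?addr_ge0 ?mulr_ge0 ?ler0n.
have SWvZ : SW v Z <= beta * SW w Z + (\sum_(i < n) t i) * delta.
  rewrite /SW mulr_sumr mulr_suml -big_split /=; apply: ler_sum => i _; exact: vb.
have sum_t : \sum_(i < n) t i <= n%:R * t istar.
  apply: le_trans (_ : _ <= \sum_(i < n) t istar) _.
    by apply: ler_sum => i _; exact: t_max.
  by rewrite sumr_const card_ord mulr_natl.
apply: le_trans SWvZ _; rewrite mulrDl.
apply: lerD; first by apply: ler_wpM2l => //; apply: le_trans (Mmax Z) SWw_v.
apply: le_trans (ler_wpM2r d0 sum_t) _.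
by rewrite mulrAC; apply: ler_wpM2l; [rewrite mulr_ge0 ?ler0n | apply: le_trans SWw_v].
Qed.

End Distortion.

Definition threshold (R : realType) (beta t : R) (l : nat) : R := t / beta ^+ l.

Section Thresholds.
Variables (R : realType) (beta : R).
Hypothesis beta_ge1 : 1 <= beta.

Lemma beta_gt0 : 0 < beta. Proof. exact: lt_le_trans beta_ge1. Qed.

Lemma threshold_le_top t l : 0 <= t -> threshold beta t l <= t.
Proof.
move=> t0; rewrite /threshold ler_pdivrMr ?exprn_gt0 ?beta_gt0 //.
by rewrite ler_peMr // exprn_ege1.
Qed.

Lemma thresholdS t l : beta * threshold beta t l.+1 = threshold beta t l.
Proof.
have b0 : beta != 0 by rewrite gt_eqF ?beta_gt0.
rewrite /threshold exprS; field; apply/andP; split=> //; exact: expf_neq0.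
Qed.

(* An agent with values v <= t whose estimate w certifies every threshold
   reached by v (levels 1..L) satisfies v <= beta w + t / beta^L: a value
   between two consecutive thresholds is within the factor beta of the lower
   one, which w reaches. *)
Lemma threshold_estimate (I : Type) (v w : I -> R) (t : R) (L : nat) :
  0 <= t -> (forall j, 0 <= w j) -> (forall j, v j <= t) ->
  (forall l j, (1 <= l <= L)%N -> threshold beta t l <= v j ->
     threshold beta t l <= w j) ->
  forall j, v j <= beta * w j + threshold beta t L.
Proof.
move=> t0 w0 vt certify j.
have levels l : (l <= L)%N -> v j <= beta * w j \/ v j <= threshold beta t l.
  elim: l => [_|l IH lL]; first by right; rewrite /threshold expr0 divr1.
  case: (IH (ltnW lL)) => [|v_le]; first by left.
  case: (ltP (v j) (threshold beta t l.+1)) => [lt|ge]; first by right; apply: ltW.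
  left; apply: le_trans v_le _; rewrite -thresholdS ler_pM2l ?beta_gt0 //.
  by apply: certify; rewrite // lL.
have thr0 : 0 <= threshold beta t L.
  by rewrite divr_ge0 // exprn_ge0 // ltW ?beta_gt0.
have bw0 : 0 <= beta * w j by rewrite mulr_ge0 // ltW ?beta_gt0.
case: (levels L (leqnn L)) => H; apply: le_trans H _; first by rewrite lerDl.
by rewrite lerDr.
Qed.

End Thresholds.

(* Binary search on the positions [lo, hi) of a ranking, keeping the invariant
   that the value at lo reaches the threshold and the value at hi does not. *)
Definition midpoint (I : nat * nat) : nat := ((I.1 + I.2) %/ 2)%N.

Definition bs_step (R : realType) (theta : R) (I : nat * nat) (x : R) : nat * nat :=
  if theta <= x then (midpoint I, I.2) else (I.1, midpoint I).

Fixpoint bs_run (R : realType) (n : nat) (g : nat -> R) (theta : R) (c : nat)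
    : nat * nat :=
  if c is c'.+1 then
    let I := bs_run n g theta c' in bs_step theta I (g (midpoint I))
  else (0%N, n).

Section BinarySearch.
Variables (R : realType) (n steps : nat) (g : nat -> R) (theta : R).

Lemma bs_run_fold c :
  foldl (bs_step theta) (0%N, n) [seq g (midpoint (bs_run n g theta j)) | j <- iota 0 c]
  = bs_run n g theta c.
Proof.
by elim: c => // c IH; rewrite iota0S map_rcons foldl_rcons IH.
Qed.

Hypothesis n_gt0 : (0 < n)%N.
Hypothesis n_le : (n <= 2 ^ steps)%N.
Hypothesis g_mono : forall p q, (p <= q < n)%N -> g q <= g p.
Hypothesis theta_top : theta <= g 0.

Definition bs_inv (c : nat) (I : nat * nat) :=
  [/\ (I.1 < I.2 <= n)%N, theta <= g I.1, I.2 = n \/ g I.2 < theta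
    & (I.2 - I.1 <= 2 ^ (steps - c))%N].

Lemma pow_halves c : (2 ^ (steps - c) <= 2 * 2 ^ (steps - c.+1))%N.
Proof.
case: (leqP steps c) => h; last by rewrite -subnSK // expnS.
have /eqP -> : (steps - c == 0)%N by rewrite subn_eq0.
by have /eqP -> : (steps - c.+1 == 0)%N by rewrite subn_eq0 leqW.
Qed.

Lemma bs_run_inv c : bs_inv c (bs_run n g theta c).
Proof.
elim: c => [|c IH] /=.
  by split; [rewrite /= n_gt0 leqnn | | left | rewrite subn0 subn0].
case: (bs_run n g theta c) IH => lo hi [/= /andP[lo_hi hi_n] g_lo hi_out len].
have K_pos : (0 < 2 ^ (steps - c.+1))%N by rewrite expn_gt0.
have := pow_halves c; rewrite /bs_step /midpoint /=.
set mid := ((lo + hi) %/ 2)%N; set K := (2 ^ (steps - c.+1))%N => halves.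
case: ifP => g_mid; split => //=.
- by apply/andP; split; [rewrite /mid; lia | exact: hi_n].
- by rewrite /mid; lia.
- have lo_mid : (lo < mid)%N.
    rewrite ltn_neqAle; apply/andP; split; last by rewrite /mid; lia.
    by apply/eqP => E; rewrite -E g_lo in g_mid.
  by apply/andP; split; rewrite /mid in lo_mid *; lia.
- by right; rewrite ltNge g_mid.
- by rewrite /mid; lia.
Qed.

(* After [steps] halvings the interval is [lo, lo+1): lo is the last position
   whose value reaches theta, and the next query is at lo itself. *)
Lemma bs_result : let lo := (bs_run n g theta steps).1 in
  [/\ midpoint (bs_run n g theta steps) = lo, (lo < n)%N, theta <= g lo
    & forall q, (q < n)%N -> theta <= g q -> (q <= lo)%N].
Proof.
case: (bs_run_inv steps); rewrite subnn expn0.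
case: (bs_run n g theta steps) => lo hi /= /andP[lo_hi hi_n] g_lo hi_out len.
have hiE : hi = lo.+1 by clear -lo_hi len; lia.
split=> //; [by rewrite /midpoint /= hiE; lia | exact: leq_trans lo_hi hi_n |].
move=> q q_n g_q; rewrite leqNgt; apply/negP => lo_q.
case: hi_out => [hin|g_hi]; first by lia.
have hi_q : (hi <= q < n)%N by rewrite q_n hiE lo_q.
by have := le_lt_trans (le_trans g_q (g_mono hi_q)) g_hi; rewrite ltxx.
Qed.

End BinarySearch.

Lemma count_quotient (Q N i : nat) : (0 < Q)%N ->
  (count (fun k => k %/ Q == i) (iota 0 (N * Q)) = if i < N then Q else 0)%N.
Proof.
move=> Q0; elim: N => [|N IH]; first by rewrite mul0n.
rewrite mulSn addnC iotaD count_cat IH.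
have -> : iota (0 + N * Q) Q = [seq N * Q + j | j <- iota 0 Q] by rewrite -iotaDl addn0.
rewrite count_map.
rewrite (@eq_in_count _ _ (fun=> N == i)); last first.
  by move=> j; rewrite mem_iota /= => j_lt; rewrite divnMDl // divn_small // addn0.
have -> : count (fun=> N == i) (iota 0 Q) = if N == i then Q else 0%N.
  by case: (N == i); rewrite ?count_predT ?count_pred0 ?size_iota.
case: (ltngtP i N) => [iN|Ni|->]; last by rewrite ltnSn.
  by rewrite addn0 ltnS (ltnW iN).
by rewrite ltnS leqNgt Ni.
Qed.

Section Algorithm.
Variables (R : realType) (n' : nat) (beta : R) (L : nat).
Local Notation n := n'.+1.

(* Query budget: per level, search_steps halvings plus one query recording the
   located position; per agent, the top item plus L levels. *)
Definition search_steps : nat := (trunc_log 2 n).+1.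
Definition level_queries : nat := search_steps.+1.
Definition agent_queries : nat := (1 + L * level_queries)%N.

Lemma search_steps_enough : (n <= 2 ^ search_steps)%N.
Proof. exact/ltnW/trunc_log_ltn. Qed.

Definition item_at (rk : ranking n) (a : 'I_n) (q : nat) : 'I_n := (rk a)^-1%g (inord q).

Definition estimate (rk : ranking n) (h : history R n) : valuation R n := fun i j =>
  \big[Num.max/0]_(e <- h | (e.1.1 == i) && (rk i j <= rk i e.1.2)%N) e.2.

Definition best_matching (rk : ranking n) (h : history R n) : matching n :=
  [arg max_(Z > (1%g : matching n)) SW (estimate rk h) Z]%O.

(* Query number m goes to agent m / agent_queries; offset 0 asks
   for its top item, the other offsets run the binary searches of the levels,
   replaying the answers of the current level from the history. *)
Definition Alg : algorithm R n := fun rk h =>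
  let m := size h in
  if (n * agent_queries <= m)%N then Output (best_matching rk h) else
  let a : 'I_n := inord (m %/ agent_queries) in
  let r := (m %% agent_queries)%N in
  if r == 0%N then Query a (item_at rk a 0) else
  let l := (r.-1 %/ level_queries).+1 in
  let c := (r.-1 %% level_queries)%N in
  let top := (nth (a, a, 0) h (m - r)).2 in
  let answers := [seq e.2 | e <- drop (m - c) h] in
  Query a (item_at rk a
    (midpoint (foldl (bs_step (threshold beta top l)) (0%N, n) answers))).

(* The queries of level l0 + 1 occupy the offsets 1 + l0 * level_queries + c. *)
Lemma level_offset_lt l0 c : (l0 < L)%N -> (c < level_queries)%N ->
  (1 + l0 * level_queries + c < agent_queries)%N.
Proof.
move=> l0L cS; rewrite /agent_queries -addnA ltn_add2l.
apply: (@leq_trans (l0.+1 * level_queries)); first by rewrite mulSn; lia.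
by rewrite leq_mul2r l0L orbT.
Qed.

Section Trace.
Variables (rk : ranking n) (v : valuation R n).

Definition value_at (a : 'I_n) (q : nat) : R := v a (item_at rk a q).
Definition top_value (a : 'I_n) : R := value_at a 0.

Definition plan (k : nat) : 'I_n * 'I_n :=
  let a : 'I_n := inord (k %/ agent_queries) in
  let r := (k %% agent_queries)%N in
  if r == 0%N then (a, item_at rk a 0) else
  let l := (r.-1 %/ level_queries).+1 in
  let c := (r.-1 %% level_queries)%N in
  (a, item_at rk a
    (midpoint (bs_run n (value_at a) (threshold beta (top_value a) l) c))).

Definition entry (k : nat) : 'I_n * 'I_n * R :=
  ((plan k).1, (plan k).2, v (plan k).1 (plan k).2).

Definition trace (m : nat) : history R n := [seq entry k | k <- iota 0 m].

Lemma plan_agent k : (plan k).1 = inord (k %/ agent_queries).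
Proof. by rewrite /plan; case: ifP. Qed.

Lemma plan_top (a : 'I_n) : plan (a * agent_queries) = (a, item_at rk a 0).
Proof. by rewrite /plan mulnK // modnMl eqxx inord_val. Qed.

Lemma plan_level (a : 'I_n) l0 c : (l0 < L)%N -> (c < level_queries)%N ->
  plan (a * agent_queries + (1 + l0 * level_queries + c)) =
  (a, item_at rk a (midpoint
        (bs_run n (value_at a) (threshold beta (top_value a) l0.+1) c))).
Proof.
move=> l0L cS; have r_lt := level_offset_lt l0L cS.
rewrite /plan divnMDl // divn_small // addn0 modnMDl modn_small // -addnA add1n /=.
by rewrite divnMDl // divn_small // addn0 modnMDl modn_small // inord_val.
Qed.

Lemma trace_step k : trace k.+1 = rcons (trace k) (entry k).
Proof. by rewrite /trace iota0S map_rcons. Qed.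

Lemma Alg_done :
  Alg rk (trace (n * agent_queries)) = Output (best_matching rk (trace (n * agent_queries))).
Proof. by rewrite /Alg size_map size_iota leqnn. Qed.

Lemma Alg_trace k : (k < n * agent_queries)%N -> Alg rk (trace k) = Query (plan k).1 (plan k).2.
Proof.
move=> k_lt; rewrite /Alg /plan size_map size_iota leqNgt k_lt /=.
have Q0 : (0 < agent_queries)%N by [].
have a_lt : (k %/ agent_queries < n)%N by rewrite ltn_divLR.
set A : 'I_n := inord (k %/ agent_queries).
have A_val : (A : nat) = (k %/ agent_queries)%N by rewrite inordK.
set r := (k %% agent_queries)%N.
case: eqP => [_ // | /eqP r_neq0].
set l0 := (r.-1 %/ level_queries)%N; set c := (r.-1 %% level_queries)%N.
have kE : k = (A * agent_queries + r)%N by rewrite A_val /r -divn_eq.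
have rE : r = (l0 * level_queries + c).+1 by rewrite /l0 /c -divn_eq prednK // lt0n.
have l0L : (l0 < L)%N.
  rewrite /l0 ltn_divLR //; have := ltn_pmod k Q0.
  by rewrite -/r /agent_queries; lia.
have c_lt : (c < level_queries)%N by rewrite ltn_pmod.
have top_E : (nth (A, A, 0) (trace k) (k - r)).2 = top_value A.
  have -> : (k - r = A * agent_queries)%N by rewrite kE addnK.
  rewrite (nth_map 0%N); last by rewrite size_iota kE; lia.
  by rewrite nth_iota ?add0n /entry ?plan_top //; rewrite kE; lia.
have answers_E : [seq e.2 | e <- drop (k - c) (trace k)] =
    [seq value_at A (midpoint (bs_run n (value_at A)
           (threshold beta (top_value A) l0.+1) j)) | j <- iota 0 c].
  rewrite /trace -map_drop drop_iota add0n (_ : (k - (k - c) = c)%N); last by lia.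
  rewrite -map_comp -[(k - c)%N]addn0 iotaDl -map_comp.
  apply/eq_in_map => j.
  rewrite mem_iota add0n => /andP[_ j_c] /=.
  have -> : (k - c + j = A * agent_queries + (1 + l0 * level_queries + j))%N by lia.
  by rewrite /entry plan_level // (ltn_trans j_c c_lt).
by rewrite top_E answers_E bs_run_fold.
Qed.

Lemma queries_trace (i : 'I_n) :
  queries_of (trace (n * agent_queries)) i = agent_queries.
Proof.
rewrite /queries_of /trace count_map.
rewrite (@eq_in_count _ _ (fun k => k %/ agent_queries == i)%N).
  by rewrite count_quotient // ltn_ord.
move=> k; rewrite mem_iota add0n /= plan_agent => k_lt.
by rewrite -val_eqE /= inordK // ltn_divLR.
Qed.

Lemma mem_trace k m : (k < m)%N -> entry k \in trace m.
Proof. by move=> k_m; rewrite map_f // mem_iota. Qed.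

Lemma slot_lt (a : 'I_n) r : (r < agent_queries)%N ->
  (a * agent_queries + r < n * agent_queries)%N.
Proof.
move=> r_lt; apply: (@leq_trans (a.+1 * agent_queries)); first by rewrite mulSn; lia.
by rewrite leq_mul2r ltn_ord orbT.
Qed.

Lemma item_atK a q : (q < n)%N -> (rk a (item_at rk a q) : nat) = q.
Proof. by move=> q_n; rewrite /item_at permKV inordK. Qed.

Lemma rankK a j : item_at rk a (rk a j) = j.
Proof. by rewrite /item_at inord_val permK. Qed.

Lemma estimate_ge0 h i j : 0 <= estimate rk h i j.
Proof. exact: bigmax_ge_id. Qed.

Lemma estimate_ge h e i j : e \in h -> e.1.1 = i -> (rk i j <= rk i e.1.2)%N ->
  e.2 <= estimate rk h i j.
Proof.
by move=> e_h e_i e_rk; apply: (bigmax_sup_seq _ e) => //; rewrite e_i eqxx e_rk.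
Qed.

Hypothesis v_ge0 : nonneg_valuation v.
Hypothesis rk_consistent : consistent rk v.

Lemma value_at_mono a p q : (p <= q < n)%N -> value_at a q <= value_at a p.
Proof.
case/andP=> p_q q_n; case: (ltngtP p q) p_q => // [p_lt _|-> _]; last by [].
by apply: rk_consistent; rewrite !item_atK // (ltn_trans p_lt).
Qed.

Lemma value_rank_mono a j j' : (rk a j <= rk a j')%N -> v a j' <= v a j.
Proof.
move=> le_rk; rewrite -(rankK a j) -(rankK a j').
by apply: value_at_mono; rewrite le_rk ltn_ord.
Qed.

Lemma value_le_top a j : v a j <= top_value a.
Proof. by apply: value_rank_mono; rewrite item_atK. Qed.

Lemma estimate_le_value m i j : estimate rk (trace m) i j <= v i j.
Proof.
rewrite /estimate big_seq_cond; apply: bigmax_le => [|e]; first exact: v_ge0.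
by case/andP=> /mapP[k _ ->] /andP[/eqP <- e_rk]; apply: value_rank_mono.
Qed.

Lemma estimate_top (a : 'I_n) :
  top_value a <= estimate rk (trace (n * agent_queries)) a (item_at rk a 0).
Proof.
have := mem_trace (slot_lt a (isT : 0 < agent_queries)%N).
rewrite addn0 /entry plan_top => e_in.
exact: (estimate_ge e_in).
Qed.

Hypothesis beta_ge1 : 1 <= beta.

(* Each level search certifies its threshold: the located position lo is the
   last reaching it, so every item reaching it is ranked no lower than lo. *)
Lemma estimate_certifies (a : 'I_n) l j : (1 <= l <= L)%N ->
  threshold beta (top_value a) l <= v a j ->
  threshold beta (top_value a) l <= estimate rk (trace (n * agent_queries)) a j.
Proof.
case: l => // l0 /andP[_ l0L] thr_j.
set theta := threshold beta (top_value a) l0.+1.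
have theta_top : theta <= value_at a 0.
  by apply: threshold_le_top => //; apply: v_ge0.
have [mid_lo lo_n g_lo lo_max] := bs_result (ltn0Sn n') search_steps_enough
  (value_at_mono a) theta_top.
set lo := (bs_run n (value_at a) theta search_steps).1 in mid_lo lo_n g_lo lo_max.
have := mem_trace (slot_lt a (level_offset_lt l0L (ltnSn search_steps))).
rewrite /entry plan_level // mid_lo => e_in.
apply: le_trans g_lo (estimate_ge e_in _ _) => //=.
by rewrite item_atK // lo_max ?ltn_ord // /value_at rankK.
Qed.

End Trace.

Theorem Alg_achieves :
  1 <= beta -> achieves Alg agent_queries (beta + n%:R / beta ^+ L).
Proof.
move=> beta_ge1 v rk v0 hc; set N := (n * agent_queries)%N.
set h := trace rk v N.
exists h, (best_matching rk h); split; last split.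
- apply: (@run_trace _ _ Alg rk v (trace rk v) (plan rk v) N _ _ (Alg_done rk v) 0 N erefl).
  by move=> k k_lt; split; [exact: Alg_trace | exact: trace_step].
- by move=> i; rewrite queries_trace.
- apply: (distortion_bound (w := estimate rk h) (t := top_value rk v)).
  + exact: ltW (beta_gt0 beta_ge1).
  + by rewrite invr_ge0 exprn_ge0 // ltW ?(beta_gt0 beta_ge1).
  + by move=> i j; apply: estimate_ge0.
  + by move=> i j; apply: estimate_le_value.
  + by move=> i; exists (item_at rk i 0); apply: estimate_top.
  + move=> i; apply: threshold_estimate => //; first exact: v0.
    * by move=> j; apply: estimate_ge0.
    * by move=> j; apply: value_le_top.
    * by move=> l j; apply: estimate_certifies.
  + by move=> Z; rewrite /best_matching; case: arg_maxP => //= M _; apply.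
Qed.

End Algorithm.

Unset Implicit Arguments.

Theorem mainTheorem3 (R : realType) :
  (* (i) one query per agent, distortion O(n) *)
  (exists C : R, forall n : nat, (0 < n)%N ->
     exists A : algorithm R n, achieves A 1 (C * n%:R)) /\
  (* (ii) for each constant k >= 1: O(log n) queries per agent, distortion O(n^(1/k)) *)
  (forall k : nat, (1 <= k)%N ->
     exists (C : R) (c : nat), forall n : nat, (0 < n)%N ->
       exists A : algorithm R n,
         achieves A (c * (trunc_log 2 n).+1) (C * powR (n%:R) (k%:R)^-1)) /\
  (* (iii) O(log^2 n) queries per agent, distortion O(1) *)
  (exists (C : R) (c : nat), forall n : nat, (0 < n)%N ->
     exists A : algorithm R n, achieves A (c * (trunc_log 2 n).+1 ^ 2) C).
Proof.
split; [|split].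
- exists 2; case=> // n' _; exists (@Alg R n' 1 0).
  apply: achieves_mono (@Alg_achieves R n' 1 0 (lexx 1)) _ _.
  + by rewrite /agent_queries mul0n.
  + by rewrite expr0 divr1 mulrDl mul1r lerD2r ler1n.
- move=> k k_ge1; exists 2, (3 * k + 1)%N; case=> // n' _.
  set b : R := powR (n'.+1%:R) (k%:R)^-1.
  have n_ge1 : 1 <= (n'.+1%:R : R) by rewrite ler1n.
  have b_ge1 : 1 <= b.
    rewrite /b -[X in X <= _](powRr0 (n'.+1%:R : R)); apply: (ler_powR n_ge1).
    by rewrite invr_ge0 ler0n.
  have bk : b ^+ k = n'.+1%:R.
    rewrite /b -powR_mulrn ?powR_ge0 // -powRrM mulVf ?powRr1 ?ler0n //.
    by rewrite pnatr_eq0 -lt0n.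
  exists (@Alg R n' b k).
  apply: achieves_mono (@Alg_achieves R n' b k b_ge1) _ _.
  + rewrite /agent_queries /level_queries /search_steps; set T := trunc_log 2 n'.+1; nia.
  + rewrite bk divff ?pnatr_eq0 //; lra.
- exists 3, 3%N; case=> // n' _.
  have two_ge1 : (1 : R) <= 2 by rewrite ler1n.
  exists (@Alg R n' 2 (trunc_log 2 n'.+1).+1).
  apply: achieves_mono (@Alg_achieves R n' 2 _ two_ge1) _ _.
  + rewrite /agent_queries /level_queries /search_steps; set T := trunc_log 2 n'.+1; nia.
  + have n_le : (n'.+1%:R : R) <= 2 ^+ (trunc_log 2 n'.+1).+1.
      by rewrite -natrX ler_nat ltnW // trunc_log_ltn.
    have pow_gt0 : 0 < (2 : R) ^+ (trunc_log 2 n'.+1).+1 by apply: exprn_gt0.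
    have : n'.+1%:R / 2 ^+ (trunc_log 2 n'.+1).+1 <= (1 : R).
      by rewrite ler_pdivrMr // mul1r.
    lra.
Qed.
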